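(* Let $F$ be a sensori-computational device with observation variator $(D,\bowtie)$ for $Y(F)$. Suppose $\bowtie$ is single-valued in its third argument, i.e., $(y,d,y')\in\bowtie$ and $(y,d,y'')\in\bowtie$ imply $y'=y''$, and suppose the delta relation $\Delta_F^{D}$ is left-total on $\mathcal{L}(F)$ (every $s\in\mathcal{L}(F)$ is related to some string). Then there exists a sensori-computational device $F'$ that output simulates $F$ modulo $\Delta_F^{D}$.
   Context: A sensori-computational device is a 6-tuple $F=(V,V_0,Y,\tau,C,c)$ where $V$ is a non-empty finite set of states, $V_0\subseteq V$ a non-empty set of initial states, $Y=Y(F)$ a finite set of observations, $\tau:V\times V\to\mathcal{P}(Y)$, $C$ a set of outputs, $c:V\to\mathcal{P}(C)\setminus\{\emptyset\}$. A string $y_1\cdots y_n$ reaches $w$ from $v$ if there are states $w_0=v,\dots,w_n=w$ with $y_i\in\tau(w_{i-1},w_i)$; $\mathcal{R}_F(s)$ is the set of states reached by $s$ from some initial state; $\mathcal{L}(F)=\{s\in Y^*:\mathcal{R}_F(s)\ne\emptyset\}$; $\mathcal{C}_F(s)=\bigcup_{v\in\mathcal{R}_F(s)}c(v)$. For a relation $R\subseteq A\times B$ between sets of strings, $F'$ output simulates $F$ modulo $R$ if for every $s\in\mathcal{L}(F)$: (1) some $t\in\mathcal{L}(F')$ has $s\,R\,t$; (2) every $t\in B$ with $s\,R\,t$ satisfies $t\in\mathcal{L}(F')$ and $\mathcal{C}_F(s)\supseteq\mathcal{C}_{F'}(t)$. An observation variator for $Y$ is a set $D$ with a ternary relation $\bowtie\subseteq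 Y\times D\times Y$. The delta relation $\Delta_F^{D}\subseteq\mathcal{L}(F)\times(\{\epsilon\}\cup Y\cdot D^* )$ consists of: $(\epsilon,\epsilon)$; $(y_0,y_0)$ for each $y_0\in Y\cap\mathcal{L}(F)$; and $(y_0y_1\cdots y_m,\ y_0d_1\cdots d_m)$ for $y_0\cdots y_m\in\mathcal{L}(F)$, $m\ge1$, whenever $(y_{k-1},d_k,y_k)\in\bowtie$ for all $k$. *)

From mathcomp Require Import all_boot.
Set Implicit Arguments. Unset Strict Implicit. Unset Printing Implicit Defensive.

Record device (Y : finType) (C : Type) := Device {
  dV : finType;
  dV0 : {set dV};
  dV0_nonempty : dV0 != set0;
  dtau : dV -> dV -> {set Y};
  dc : dV -> C -> Prop;
  dc_nonempty : forall v, exists o, dc v o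
}.

Section Dev.
Variables (Y : finType) (C : Type) (F : device Y C).

Fixpoint reaches (v : dV F) (s : seq Y) (w : dV F) : Prop :=
  match s with
  | [::] => v = w
  | y :: s' => exists u, y \in dtau v u /\ reaches u s' w
  end.

Definition reached (s : seq Y) (w : dV F) : Prop :=
  exists2 v0, v0 \in dV0 F & reaches v0 s w.

Definition inL (s : seq Y) : Prop := exists w, reached s w.

Definition outC (s : seq Y) (o : C) : Prop := exists2 v, reached s v & dc v o.
End Dev.

Definition output_simulates (Y Y' : finType) (C : Type)
    (F : device Y C) (F' : device Y' C) (R : seq Y -> seq Y' -> Prop) : Prop :=
  forall s, inL F s ->
    (exists t, inL F' t /\ R s t) /\
    (forall t, R s t -> inL F' t /\ (forall o, outC F' t o -> outC F s o)).

Fixpoint vchain (Y D : Type) (bowtie : Y -> D -> Y -> Prop)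
    (y : Y) (ys : seq Y) (ds : seq D) : Prop :=
  match ys, ds with
  | [::], [::] => True
  | y' :: ys', d :: ds' => bowtie y d y' /\ vchain bowtie y' ys' ds'
  | _, _ => False
  end.

(* The delta relation Delta_F^D, subset of L(F) x ({eps} \cup Y . D^* );
   strings of the target live over the alphabet Y + D. *)
Definition delta_rel (Y D : finType) (C : Type) (F : device Y C)
    (bowtie : Y -> D -> Y -> Prop) (s : seq Y) (t : seq (Y + D)%type) : Prop :=
  inL F s /\
  match s with
  | [::] => t = [::]
  | y0 :: ys => exists2 ds, t = inl y0 :: map inr ds & vchain bowtie y0 ys ds
  end.

From mathcomp Require Import all_boot boolp.
Set Implicit Arguments. Unset Strict Implicit. Unset Printing Implicit Defensive.

(* F' reads the first observation y0 literally and afterwards only variations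
   d, recovering each next observation through bowtie. Its states pair a state
   of F with the last recovered observation, plus a fresh initial state that
   carries the outputs of all initial states of F, i.e. C_F(epsilon). Because
   bowtie is functional, inl y0 :: map inr ds determines the unique y1 .. ym
   with vchain bowtie y0 [:: y1; ..; ym] ds, so every state F' reaches on t is
   a state F reaches on the one string s related to t, with the same outputs. *)

Section Variator.
Variables (Y D : finType) (C : Type) (F : device Y C).
Variable bowtie : Y -> D -> Y -> Prop.
Hypothesis bowtie_functional :
  forall y d y' y'', bowtie y d y' -> bowtie y d y'' -> y' = y''.

Definition vstate := option (dV F * Y).

Definition vstep (x x' : vstate) (a : (Y + D)%type) : Prop :=
  match x, x', a with
  | None, Some (w, y'), inl y => y = y' /\ exists2 v0, v0 \in dV0 F & y \in dtau v0 w
  | Some (u, y), Some (w, y'), inr d => bowtie y d y' /\ y' \in dtau u w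
  | _, _, _ => False
  end.

Definition vout (x : vstate) (o : C) : Prop :=
  if x is Some (v, _) then dc v o else exists2 v0, v0 \in dV0 F & dc v0 o.

Lemma vout_nonempty x : exists o, vout x o.
Proof.
case: x => [[v y]|] /=; first exact: dc_nonempty.
have /set0Pn [v0 v0_init] := dV0_nonempty F.
have [o v0o] := dc_nonempty v0.
by exists o, v0.
Qed.

Lemma vinit_nonempty : [set None : vstate] != set0.
Proof. by apply/set0Pn; exists None; rewrite inE. Qed.

Definition vtau (x x' : vstate) : {set Y + D} := [set a | `[< vstep x x' a >]].

Lemma vstepP x x' a : a \in vtau x x' <-> vstep x x' a.
Proof. by rewrite inE; split => /asboolP. Qed.

Definition variator_device : device (Y + D)%type C :=
  Device vinit_nonempty vtau vout_nonempty.

Local Notation F' := variator_device.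

Lemma reaches_variator u y ys ds w :
  vchain bowtie y ys ds -> reaches u ys w ->
  reaches (F := F') (Some (u, y)) (map inr ds) (Some (w, last y ys)).
Proof.
elim: ys ds u y => [|y1 ys IH] [|d ds] u y //=; first by move=> _ ->.
move=> [y_d_y1 chain] [u1 [u_u1 reach]].
by exists (Some (u1, y1)); split; [apply/vstepP | apply: IH].
Qed.

Lemma variator_reaches u y ds x :
  reaches (F := F') (Some (u, y)) (map inr ds) x ->
  exists w ys, [/\ x = Some (w, last y ys), vchain bowtie y ys ds & reaches u ys w].
Proof.
elim: ds u y => [|d ds IH] u y /=; first by move=> <-; exists u, [::].
move=> [[[u1 y1]|] [/vstepP step reach]] //; case: step => y_d_y1 u_u1.
have [w [ys [-> chain reach_w]]] := IH _ _ reach.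
by exists w, (y1 :: ys); split => //; exists u1.
Qed.

Lemma vchain_functional y ys ys' ds :
  vchain bowtie y ys ds -> vchain bowtie y ys' ds -> ys = ys'.
Proof.
elim: ys ys' ds y => [|y1 ys IH] [|y1' ys'] [|d ds] y //= [y_d_y1 chain].
by case=> /(bowtie_functional y_d_y1) <- /(IH _ _ _ chain) ->.
Qed.

Lemma variator_reached_nil x : reached (F := F') [::] x -> x = None.
Proof. by case=> x0 /set1P -> ->. Qed.

Lemma variator_reached_cons y0 ds x :
  reached (F := F') (inl y0 :: map inr ds) x ->
  exists w ys, [/\ x = Some (w, last y0 ys), vchain bowtie y0 ys ds
                 & reached (y0 :: ys) w].
Proof.
case=> _ /set1P -> [[[u y]|] [/vstepP step reach]] //.
case: step => -> [v0 v0_init v0_u].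
have [w [ys [-> chain reach_w]]] := variator_reaches reach.
by exists w, ys; split => //; exists v0 => //; exists u.
Qed.

Lemma reached_variator y0 ys ds w :
  vchain bowtie y0 ys ds -> reached (y0 :: ys) w ->
  reached (F := F') (inl y0 :: map inr ds) (Some (w, last y0 ys)).
Proof.
move=> chain [v0 v0_init [u [v0_u reach]]].
exists None; first exact/set1P.
exists (Some (u, y0)); split; last exact: reaches_variator.
by apply/vstepP; split => //; exists v0.
Qed.

Lemma variator_simulates_delta s t : delta_rel F bowtie s t ->
  inL F' t /\ (forall o, outC F' t o -> outC F s o).
Proof.
case: s => [|y0 ys] [[w reach]].
  move=> ->; split; first by exists None, None => //; exact/set1P.
  by move=> o [x /variator_reached_nil -> [v0 v0_init v0o]]; exists v0 => //; exists v0.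
move=> [ds -> chain]; split; first by eexists; exact: reached_variator reach.
move=> o [x /variator_reached_cons [w' [ys' [-> chain' reach']]] w'o].
by rewrite (vchain_functional chain chain'); exists w'.
Qed.

End Variator.

Theorem proposition1 (Y D : finType) (C : Type) (F : device Y C)
    (bowtie : Y -> D -> Y -> Prop)
    (Hsv : forall y d y' y'', bowtie y d y' -> bowtie y d y'' -> y' = y'')
    (Htot : forall s, inL F s -> exists t, delta_rel F bowtie s t) :
  exists F' : device (Y + D)%type C, output_simulates F F' (delta_rel F bowtie).
Proof.
exists (variator_device F bowtie) => s s_in_L; split.
  have [t st] := Htot s s_in_L.
  by exists t; split => //; exact: (variator_simulates_delta Hsv st).1.
by move=> t st; exact: variator_simulates_delta.
Qed.
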